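(* Let $\mathbb{F}$ be an infinite field with $\operatorname{char}(\mathbb{F})\neq 2$ and let $G$ be a non-abelian group with a group involution $\ast$ and a non-trivial orientation $\sigma:G\to\{\pm1\}$ such that $gg^\ast\in N=\ker\sigma$ for all $g\in G$. Suppose $\mathbb{F}G$ is normal with respect to the oriented involution $\circledast$ and that $N$, with the restriction of $\ast$, is an SLC-group with unique non-identity commutator $s$. Then $G$ is an LC-group and $\ast$ is given by $g^\ast=g$ if $g\in N\cap\zeta(G)$ or $g\in(G\setminus N)\setminus\zeta(G)$, and $g^\ast=sg$ otherwise.
   Context: A group involution on $G$ is a map $\ast:G\to G$ with $(gh)^\ast=h^\ast g^\ast$ and $(g^\ast)^\ast=g$. An orientation is a group homomorphism $\sigma:G\to\{\pm1\}$. The oriented involution is $(\sum_g\alpha_g g)^\circledast=\sum_g\alpha_g\sigma(g)g^\ast$ on $\mathbb{F}G$. $\mathbb{F}G$ is normal if $\alpha\alpha^\circledast=\alpha^\circledast\alpha$ for all $\alpha\in\mathbb{F}G$. $\zeta(G)$ is the center of $G$, $(g,h)=g^{-1}h^{-1}gh$. A group $H$ is an LC-group if it is non-abelian and for all $g,h\in H$: $gh=hg$ iff at least one of $g,h,gh$ is in $\zeta(H)$. $H$ with involution $\ast$ is an SLC-group if it is an LC-group with a unique non-identity commutator $s$ (i.e. $\{(g,h):g,h\in H\}=\{1,s\}$) and $h^\ast=h$ for $h\in\zeta(H)$, $h^\ast=sh$ for $h\notin\zeta(H)$. *)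

From HB Require Import structures.
From mathcomp Require Import all_boot all_algebra.
Set Implicit Arguments. Unset Strict Implicit. Unset Printing Implicit Defensive.
Import GRing.Theory.

Section Defs.
Variable G : groupType.

Definition is_group_involution (star : G -> G) : Prop :=
  (forall g h : G, star (g * h)%g = (star h * star g)%g) /\ involutive star.

Definition is_orientation (sigma : G -> int) : Prop :=
  (forall g, sigma g = 1%R \/ sigma g = (-1)%R) /\
  (forall g h, sigma (g * h)%g = (sigma g * sigma h)%R).

Definition kerO (sigma : G -> int) : G -> Prop := fun g => sigma g = 1%R.

Definition in_center (H : G -> Prop) (h : G) : Prop :=
  H h /\ forall k, H k -> (h * k = k * h)%g.

Definition is_LC (H : G -> Prop) : Prop :=
  (exists g h, H g /\ H h /\ (g * h <> h * g)%g) /\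
  (forall g h, H g -> H h ->
     ((g * h = h * g)%g <->
      (in_center H g \/ in_center H h \/ in_center H (g * h)%g))).

Definition is_SLC (H : G -> Prop) (star : G -> G) (s : G) : Prop :=
  is_LC H /\ s <> 1%g /\
  (forall g h, H g -> H h -> [~ g, h]%g = 1%g \/ [~ g, h]%g = s) /\
  (exists g h, H g /\ H h /\ [~ g, h]%g = 1%g) /\
  (exists g h, H g /\ H h /\ [~ g, h]%g = s) /\
  (forall h, H h -> in_center H h -> star h = h) /\
  (forall h, H h -> ~ in_center H h -> star h = (s * h)%g).

Variable F : fieldType.

(* Group algebra FG: an element is a formal finite sum \sum a_i g_i,
   represented by a list of pairs (a_i, g_i); two such lists represent
   the same element of FG iff they have the same coefficient function. *)
Definition ga_coef (a : seq (F * G)) (x : G) : F :=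
  (\sum_(p <- a | p.2 == x) p.1)%R.

Definition ga_mul (a b : seq (F * G)) : seq (F * G) :=
  [seq ((p.1 * q.1)%R, (p.2 * q.2)%g) | p <- a, q <- b].

Definition ga_oinv (sigma : G -> int) (star : G -> G) (a : seq (F * G)) :=
  [seq (((sigma p.2)%:~R * p.1)%R, star p.2) | p <- a].

Definition ga_normal (sigma : G -> int) (star : G -> G) : Prop :=
  forall a : seq (F * G),
    ga_coef (ga_mul a (ga_oinv sigma star a)) =1
    ga_coef (ga_mul (ga_oinv sigma star a) a).

End Defs.

Definition infinite_field (F : fieldType) : Prop :=
  forall s : seq F, exists x : F, x \notin s.

(* Applying normality of FG to a = g and to a = g + h and comparing coefficients
   (char F <> 2) gives g g^* = g^* g and the multiset identities
   {g h^*, h g^*} = {g^* h, h^* g} when sigma g = sigma h, and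
   {h g^*, h^* g} = {g^* h, g h^*} when sigma g = 1 = - sigma h.  Together with
   the SLC structure of N = ker sigma they show that s is central of order 2,
   that the centre of N is central in G, and that g^* = t(g) g for non-central g
   and g^* = s t(g) g for central g, where t(g) = s on N and t(g) = 1 off N.
   As t(gh) = s t(g) t(h), commuting non-central g, h with non-central product
   would force s = 1, so G is an LC-group. *)

From HB Require Import structures.
From mathcomp Require Import all_boot all_algebra.
From Stdlib Require Import Classical.
Set Implicit Arguments. Unset Strict Implicit. Unset Printing Implicit Defensive.
Import GRing.Theory.
Local Open Scope ring_scope.

Lemma perm_eq2_cases (T : eqType) (a b c d : T) :
  perm_eq [:: a; b] [:: c; d] -> (a = c /\ b = d) \/ (a = d /\ b = c).
Proof.
move=> eq_ab_cd; have : a \in [:: c; d] by rewrite -(perm_mem eq_ab_cd) mem_head.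
rewrite !inE => /orP[/eqP eq_ac | /eqP eq_ad]; [left; subst c | right; subst d].
  by move: eq_ab_cd; rewrite perm_cons => /perm_small_eq-/(_ isT) [].
move: eq_ab_cd; rewrite perm_sym -[[:: c; a]]/([:: c] ++ [:: a] ++ [::]).
by rewrite perm_catCA perm_cons => /perm_small_eq-/(_ isT) [].
Qed.

Lemma natr2_neq0 (F : fieldType) : 2 \notin [pchar F] -> 2%:R != 0 :> F.
Proof. by apply: contra => two0; rewrite inE /= two0. Qed.

Lemma natr_inj_le2 (R : nzRingType) (m n : nat) : 2%:R != 0 :> R ->
  (m <= 2)%N -> (n <= 2)%N -> m%:R = n%:R :> R -> m = n.
Proof.
move=> two_nz; wlog le_mn : m n / (m <= n)%N => [wlog_mn|].
  by case: (leqP m n) => [|/ltnW] le hm hn e; [|apply/esym]; apply: wlog_mn.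
move=> _ le_n2 /eqP; rewrite eq_sym -subr_eq0 -natrB // => /eqP diff0.
apply/eqP; rewrite eqn_leq le_mn -subn_eq0 /=.
have : (n - m <= 2)%N := leq_trans (leq_subr m n) le_n2.
case: (n - m)%N diff0 => [|[|[|//]]] // /eqP.
  by rewrite oner_eq0.
by rewrite (negbTE two_nz).
Qed.

Lemma perm_eq2_natr (R : nzRingType) (T : eqType) (a b c d : T) :
  2%:R != 0 :> R ->
  (forall x, (a == x)%:R + (b == x)%:R = (c == x)%:R + (d == x)%:R :> R) ->
  perm_eq [:: a; b] [:: c; d].
Proof.
move=> two_nz eq_abcd; apply/allP => x _; apply/eqP/(natr_inj_le2 two_nz).
1,2: by rewrite /= addn0 -[2%N]/(1 + 1)%N leq_add ?leq_b1.
by rewrite /= !addn0 !natrD.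
Qed.

Lemma ga_coef_nil (F : fieldType) (G : groupType) (x : G) :
  ga_coef (F := F) [::] x = 0.
Proof. by rewrite /ga_coef big_nil. Qed.

Lemma ga_coef_cons (F : fieldType) (G : groupType) (c : F) (y : G) a x :
  ga_coef ((c, y) :: a) x = (y == x)%:R * c + ga_coef a x.
Proof. by rewrite /ga_coef big_cons /=; case: eqP; rewrite ?mul1r ?mul0r ?add0r. Qed.

Section NormalGroupAlgebra.

Variables (F : fieldType) (G : groupType) (sigma : G -> int) (star : G -> G).
Hypothesis two_nz : 2%:R != 0 :> F.
Hypothesis sigma_sign : forall g, sigma g = 1 \/ sigma g = -1.
Hypothesis FG_normal : ga_normal F sigma star.

Let sign_nz g : (sigma g)%:~R != 0 :> F.
Proof. by case: (sigma_sign g) => ->; rewrite ?rmorphN1 ?oppr_eq0 oner_eq0. Qed.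

Lemma ga_normal_star_comm g : (g * star g = star g * g)%g.
Proof.
have := FG_normal [:: (1, g)] (g * star g)%g.
rewrite /ga_mul /ga_oinv /= !ga_coef_cons !ga_coef_nil eqxx !mulr1 !mul1r !addr0.
by case: eqP => // _; rewrite mul0r => /eqP; rewrite (negbTE (sign_nz g)).
Qed.

(* The coefficient of x in the normality identity for a = g + h, once the
   equal terms coming from g g^* and h h^* are cancelled. *)
Lemma ga_normal_coef2 g h x :
  (sigma h)%:~R * (g * star h == x)%g%:R + (sigma g)%:~R * (h * star g == x)%g%:R
  = (sigma g)%:~R * (star g * h == x)%g%:R + (sigma h)%:~R * (star h * g == x)%g%:R :> F.
Proof.
have := FG_normal [:: (1, g); (1, h)] x.
rewrite /ga_mul /ga_oinv /= !ga_coef_cons !ga_coef_nil !mulr1 !mul1r !addr0.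
rewrite !ga_normal_star_comm => /addrI; rewrite !addrA => /addIr.
by rewrite ![(_ == x)%:R * _]mulrC.
Qed.

Lemma ga_normal_pair_same_sign g h : sigma g = sigma h ->
  perm_eq [:: g * star h; h * star g]%g [:: star g * h; star h * g]%g.
Proof.
move=> eq_gh; apply: perm_eq2_natr two_nz _ => x; have := ga_normal_coef2 g h x.
rewrite eq_gh -!mulrDr; apply: mulfI; exact: sign_nz.
Qed.

Lemma ga_normal_pair_opp_sign g h : sigma g = 1 -> sigma h = -1 ->
  perm_eq [:: h * star g; star h * g]%g [:: star g * h; g * star h]%g.
Proof.
move=> g1 hN1; apply: perm_eq2_natr two_nz _ => x; have := ga_normal_coef2 g h x.
rewrite g1 hN1 rmorph1 rmorphN1 !mul1r !mulN1r addrC => /eqP.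
by rewrite subr_eq => /eqP ->; rewrite addrAC subrK.
Qed.

End NormalGroupAlgebra.

Section StarOnOrientedGroup.
Local Open Scope group_scope.

Variables (G : groupType) (star : G -> G) (sigma : G -> int) (s : G).
Local Notation N := (kerO sigma).

Hypothesis starM : forall g h, star (g * h) = star h * star g.
Hypothesis sigma_sign : forall g, sigma g = 1%R \/ sigma g = (-1)%R.
Hypothesis sigmaM : forall g h, sigma (g * h) = (sigma g * sigma h)%R.
Hypothesis star_comm : forall g, g * star g = star g * g.
Hypothesis pair_same_sign : forall g h, sigma g = sigma h ->
  perm_eq [:: g * star h; h * star g] [:: star g * h; star h * g].
Hypothesis pair_opp_sign : forall g h, sigma g = 1%R -> sigma h = (-1)%R ->
  perm_eq [:: h * star g; star h * g] [:: star g * h; g * star h].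
Hypothesis N_nonabelian : exists g h, N g /\ N h /\ g * h <> h * g.
Hypothesis s_neq1 : s <> 1.
Hypothesis N_commutator : forall g h, N g -> N h -> [~ g, h] = 1 \/ [~ g, h] = s.
Hypothesis s_commutator : exists g h, N g /\ N h /\ [~ g, h] = s.
Hypothesis star_center : forall h, N h -> in_center N h -> star h = h.
Hypothesis star_noncenter : forall h, N h -> ~ in_center N h -> star h = s * h.

Definition central (g : G) := forall k, commute g k.

Lemma in_centerT g : in_center (fun _ => True) g <-> central g.
Proof. by split=> [[_ cg] k | cg]; [apply: cg | split=> // k _; apply: cg]. Qed.

Lemma sigma_eqN1 g : sigma g <> 1%R -> sigma g = (-1)%R.
Proof. by case: (sigma_sign g). Qed.

Lemma sigma1 : sigma 1 = 1%R.
Proof. by have := sigmaM 1 1; rewrite mulg1; case: (sigma_sign 1) => ->. Qed.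

Lemma sigmaJ g k : sigma (g ^ k) = sigma g.
Proof. by rewrite conjgE !sigmaM mulrCA -sigmaM mulVg sigma1 mulr1. Qed.

Lemma s_central : central s.
Proof.
move=> k; have [g [h [Ng [Nh gh_s]]]] := s_commutator.
have NJ x : N x -> N (x ^ k) by rewrite /kerO sigmaJ.
have := N_commutator (NJ g Ng) (NJ h Nh); rewrite -conjRg gh_s.
case=> [/eqP | sk_s]; first by rewrite conjg_eq1 => /eqP.
by rewrite /commute conjgC sk_s.
Qed.

Lemma s_involutive : s * s = 1.
Proof.
have [g [h [Ng [Nh gh_s]]]] := s_commutator.
have := N_commutator Nh Ng; rewrite -invgR gh_s.
case=> [/eqP | sV_s]; first by rewrite invg_eq1 => /eqP.
by rewrite -{2}sV_s mulgV.
Qed.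

Lemma s_mulg_neq x : s * x <> x.
Proof. by rewrite -{2}[x]mul1g => /mulIg. Qed.

Lemma kerO_center_central z : in_center N z -> central z.
Proof.
move=> zZN k; have /pair_same_sign/perm_eq2_cases : sigma k = sigma (k * z).
  by rewrite sigmaM zZN.1 mulr1.
rewrite starM (star_center zZN.1 zZN) -[z * star k * k]mulgA -star_comm !mulgA.
by case=> [[_] | [+ _]] => /mulIg.
Qed.

Lemma exists_ker_noncommuting h : ~ N h -> ~ central h ->
  exists2 m, N m & ~ commute h m.
Proof.
move=> /sigma_eqN1 hN1 /not_all_ex_not [k hk].
case: (sigma_sign k) => [Nk | kN1]; first by exists k.
exists (h * k); first by rewrite /kerO sigmaM hN1 kN1.
by rewrite /commute -mulgA => /mulgI.
Qed.

Lemma star_notker_noncentral h : ~ N h -> ~ central h -> star h = h.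
Proof.
move=> nNh nch; have [m Nm hm_nc] := exists_ker_noncommuting nNh nch.
have sm : star m = s * m.
  by apply: (star_noncenter Nm) => /kerO_center_central cm; apply/hm_nc/commute_sym/cm.
have hm_s : h * m = s * m * h.
  have /pair_same_sign/perm_eq2_cases : sigma h = sigma (h * m).
    by rewrite sigmaM Nm mulr1.
  rewrite starM sm -!mulgA -star_comm !mulgA -(s_central h).
  case=> [[_ /mulIg //] | [/mulIg + _]].
  by rewrite -!mulgA => /mulgI /hm_nc.
have /perm_eq2_cases := pair_opp_sign Nm (sigma_eqN1 nNh).
rewrite sm mulgA -(s_central h) -hm_s -mulgA.
by case=> [[/s_mulg_neq] | [_ /mulIg]].
Qed.

Lemma star_notker_central h : ~ N h -> central h -> star h = s * h.
Proof.
move=> nNh ch; have [g [k [Ng [Nk gk_nc]]]] := N_nonabelian.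
have sg : star g = s * g.
  by apply: (star_noncenter Ng) => /kerO_center_central cg; apply/gk_nc/cg.
have nNhg : ~ N (h * g) by rewrite /kerO sigmaM Ng mulr1.
have nchg : ~ central (h * g).
  move=> chg; apply/gk_nc/(mulgI h).
  by rewrite mulgA chg mulgA -(ch k) -mulgA.
have := star_notker_noncentral nNhg nchg.
rewrite starM sg (s_central g) -mulgA (ch g) => /mulgI sh_h.
by rewrite -{2}sh_h mulgA s_involutive mul1g.
Qed.

Definition twist g := if sigma g == 1%R then s else 1.

Lemma twist_central g : central (twist g).
Proof.
by rewrite /twist; case: ifP => _ k; [apply: s_central | rewrite /commute mul1g mulg1].
Qed.

Lemma twistM g h : twist (g * h) = s * twist g * twist h.
Proof.
rewrite /twist sigmaM; case: (sigma_sign g) => ->; case: (sigma_sign h) => -> /=;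
  by rewrite ?mulg1 ?s_involutive ?mul1g.
Qed.

Lemma star_noncentral g : ~ central g -> star g = twist g * g.
Proof.
move=> ncg; rewrite /twist; case: (sigma_sign g) => [Ng | gN1].
  rewrite Ng eqxx; apply: (star_noncenter Ng).
  by move/kerO_center_central.
rewrite gN1 /= mul1g; apply: star_notker_noncentral ncg.
by rewrite /kerO gN1.
Qed.

Lemma star_central g : central g -> star g = s * twist g * g.
Proof.
move=> cg; rewrite /twist; case: (sigma_sign g) => [Ng | gN1].
  rewrite Ng eqxx s_involutive mul1g; apply: (star_center Ng).
  by split=> // k _; apply: cg.
rewrite gN1 /= mulg1; apply: star_notker_central cg.
by rewrite /kerO gN1.
Qed.

Lemma commute_iff_central g h :
  commute g h <-> central g \/ central h \/ central (g * h).
Proof.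
split=> [cgh | [cg | [ch | cgh]]]; last 3 first.
- exact: cg.
- exact/commute_sym/ch.
- by apply: (mulgI g); rewrite -(cgh g) mulgA.
apply: NNPP => /not_or_and [ncg /not_or_and [nch ncgh]].
apply: (@s_mulg_neq (twist g * twist h * (g * h))).
have := starM g h; rewrite !star_noncentral // twistM.
have -> : twist h * h * (twist g * g) = twist g * twist h * (g * h).
  rewrite -mulgA (mulgA h) -(twist_central g h) -!mulgA cgh.
  by rewrite !mulgA (twist_central h (twist g)).
by rewrite !mulgA.
Qed.

Lemma LC_group : is_LC (fun _ : G => True).
Proof.
split; first by have [g [h [_ [_ gh_nc]]]] := N_nonabelian; exists g, h.
by move=> g h _ _; rewrite !in_centerT; apply: commute_iff_central.
Qed.

Lemma star_formula g :
  ((N g /\ central g) \/ (~ N g /\ ~ central g) -> star g = g) /\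
  (~ ((N g /\ central g) \/ (~ N g /\ ~ central g)) -> star g = s * g).
Proof.
have [cg | ncg] := classic (central g); have [Ng | nNg] := classic (N g).
- rewrite star_central // /twist Ng eqxx s_involutive mul1g.
  by split=> H //; exfalso; tauto.
- rewrite star_central // /twist (sigma_eqN1 nNg) /= mulg1.
  by split=> H //; exfalso; tauto.
- rewrite star_noncentral // /twist Ng eqxx.
  by split=> H //; exfalso; tauto.
- rewrite star_noncentral // /twist (sigma_eqN1 nNg) /= mul1g.
  by split=> H //; exfalso; tauto.
Qed.

End StarOnOrientedGroup.

Theorem proposition1 (F : fieldType) (G : groupType)
  (star : G -> G) (sigma : G -> int) (s : G) :
  infinite_field F ->
  (2 \notin [pchar F])%R ->
  (exists g h : G, (g * h <> h * g)%g) ->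
  is_group_involution star ->
  is_orientation sigma ->
  (exists g : G, sigma g = (-1)%R) ->
  (forall g : G, kerO sigma (g * star g)%g) ->
  ga_normal F sigma star ->
  is_SLC (kerO sigma) star s ->
  is_LC (fun _ : G => True) /\
  (forall g : G,
     let Z := in_center (fun _ : G => True) g in
     let N := kerO sigma g in
     ((N /\ Z) \/ (~ N /\ ~ Z) -> star g = g) /\
     (~ ((N /\ Z) \/ (~ N /\ ~ Z)) -> star g = (s * g)%g)).
Proof.
move=> _ char2 _ [starM _] [sigma_sign sigmaM] _ _ FG_normal.
move=> [[N_nonabelian _] [s_neq1 [N_commutator [_ [s_commutator]]]]].
move=> [star_center star_noncenter].
have two_nz := natr2_neq0 char2.
have star_comm := ga_normal_star_comm sigma_sign FG_normal.
have pair_same_sign := ga_normal_pair_same_sign two_nz sigma_sign FG_normal.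
have pair_opp_sign := ga_normal_pair_opp_sign two_nz sigma_sign FG_normal.
split=> [|g /=]; first by apply: (LC_group (s := s)).
by rewrite in_centerT; apply: star_formula.
Qed.
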